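(* Any robust protocol over an erasure channel has a fixed order of speaking.
   Context: An erasure channel over alphabet $\Sigma$ is a channel $\Sigma\to\Sigma\cup\{\bot\}$ in which the adversary may only replace a transmitted symbol by the erasure mark $\bot$; there is no feedback. In each round exactly one party (Alice, holding input $x$, or Bob, holding input $y$) sends one symbol. A protocol is robust if (1) for all inputs it runs for a fixed number $N$ of rounds and (2) at every round, for all inputs and every possible erasure pattern, the parties agree on who speaks next. It has a fixed order of speaking if there is a function $g:\mathbb{N}\to\{\text{Alice},\text{Bob}\}$ such that the speaker at round $i$ is $g(i)$, independent of the inputs and of the erasure pattern. *)

From mathcomp Require Import all_boot.
Set Implicit Arguments. Unset Strict Implicit. Unset Printing Implicit Defensive.

(* Parties: a speaker is encoded as a bool, [true] = Alice, [false] = Bob.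
   Erasure channel over alphabet Sigma: a received symbol is an
   [option Sigma], where [None] is the erasure mark _|_ .

   A party's view is the chronological
   sequence of symbols it has recorded so far (one entry per past round: the
   symbol it sent if it spoke, otherwise what it received, possibly None).
   The round index is [size view].
   - [a_turn x va]  : Alice's belief "Alice speaks in the next round".
   - [b_turn y vb]  : Bob's belief   "Alice speaks in the next round".
   - [a_msg x va], [b_msg y vb] : the symbol sent when speaking. *)
Record protocol (X Y Sigma : Type) := Protocol {
  a_turn : X -> seq (option Sigma) -> bool;
  b_turn : Y -> seq (option Sigma) -> bool;
  a_msg  : X -> seq (option Sigma) -> Sigma;
  b_msg  : Y -> seq (option Sigma) -> Sigma
}.

(* An erasure pattern: [e i = true] iff the adversary erases the symbol
   transmitted in round i.  Arbitrary patterns are allowed. *)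
Definition erasure_pattern := nat -> bool.

(* The
   behaviour in case of disagreement is irrelevant for robust protocols. *)
Fixpoint views X Y Sigma (P : protocol X Y Sigma) (x : X) (y : Y)
    (e : erasure_pattern) (i : nat) : seq (option Sigma) * seq (option Sigma) :=
  match i with
  | 0 => ([::], [::])
  | i'.+1 =>
      let: (va, vb) := views P x y e i' in
      let ta := a_turn P x va in
      let tb := b_turn P y vb in
      let sa := a_msg P x va in
      let sb := b_msg P y vb in
      let ea := if ta then Some sa
                else if ~~ tb && ~~ e i' then Some sb else None in
      let eb := if ~~ tb then Some sb
                else if ta && ~~ e i' then Some sa else None in
      (rcons va ea, rcons vb eb)
  end.

(* The speaker in round i (0-based): the party Alice believes speaks
   (for robust protocols both parties agree on it). *)
Definition speaker X Y Sigma (P : protocol X Y Sigma) x y e i : bool :=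
  a_turn P x (views P x y e i).1.

Definition robust X Y Sigma (P : protocol X Y Sigma) (N : nat) : Prop :=
  forall (x : X) (y : Y) (e : erasure_pattern) (i : nat), i < N ->
    a_turn P x (views P x y e i).1 = b_turn P y (views P x y e i).2.

Definition fixed_order X Y Sigma (P : protocol X Y Sigma) (N : nat) : Prop :=
  exists g : nat -> bool, forall (x : X) (y : Y) (e : erasure_pattern) (i : nat),
    i < N -> speaker P x y e i = g i.

(* Erasing the symbol of a round only changes the view of the listener of that
   round, since the speaker records its own symbol.  Hence, erasing the rounds
   of a run one by one, from the last to the first, keeps at every stage the
   view of somebody who agrees on the next speaker; by robustness the speaker
   of round i is the same as under the pattern erasing everything.  Under that
   pattern a party only ever records its own symbols, so its view does not
   depend on the other party's input: Alice's view shows that the speaker does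
   not depend on y, and Bob's view that it does not depend on x. *)
From mathcomp Require Import all_boot.
From Stdlib Require Classical.

Set Implicit Arguments.
Unset Strict Implicit.

Definition erase_all : erasure_pattern := fun=> true.

Definition erase_from (e : erasure_pattern) (k : nat) : erasure_pattern :=
  fun j => (k <= j) || e j.

Section Views.
Variables (X Y Sigma : Type) (P : protocol X Y Sigma).

Lemma views_S x y e i :
  views P x y e i.+1 =
  (rcons (views P x y e i).1
     (if a_turn P x (views P x y e i).1 then Some (a_msg P x (views P x y e i).1)
      else if ~~ b_turn P y (views P x y e i).2 && ~~ e i
           then Some (b_msg P y (views P x y e i).2) else None),
   rcons (views P x y e i).2
     (if ~~ b_turn P y (views P x y e i).2 then Some (b_msg P y (views P x y e i).2)
      else if a_turn P x (views P x y e i).1 && ~~ e i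
           then Some (a_msg P x (views P x y e i).1) else None)).
Proof. by rewrite /=; case: (views P x y e i). Qed.

Lemma views_eq_prefix x y e e' i :
  (forall j, j < i -> e j = e' j) -> views P x y e i = views P x y e' i.
Proof.
elim: i => [|i IH] eq_e //.
rewrite !views_S IH ?eq_e // => j lt_ji.
by apply: eq_e; rewrite ltnW.
Qed.

Lemma alice_view_step x y y' e e' n :
  a_turn P x (views P x y e n).1 = b_turn P y (views P x y e n).2 ->
  a_turn P x (views P x y' e' n).1 = b_turn P y' (views P x y' e' n).2 ->
  (views P x y e n).1 = (views P x y' e' n).1 ->
  (~~ a_turn P x (views P x y e n).1 -> e n && e' n) ->
  (views P x y e n.+1).1 = (views P x y' e' n.+1).1.
Proof.
move=> agree agree' eq_view erased; rewrite !views_S /= -agree -agree' -eq_view.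
by case: (a_turn _ _ _) erased => // /(_ isT) /andP[-> ->].
Qed.

Lemma bob_view_step x x' y e e' n :
  a_turn P x (views P x y e n).1 = b_turn P y (views P x y e n).2 ->
  a_turn P x' (views P x' y e' n).1 = b_turn P y (views P x' y e' n).2 ->
  (views P x y e n).2 = (views P x' y e' n).2 ->
  (b_turn P y (views P x y e n).2 -> e n && e' n) ->
  (views P x y e n.+1).2 = (views P x' y e' n.+1).2.
Proof.
move=> agree agree' eq_view erased; rewrite !views_S /= agree agree' -eq_view.
by case: (b_turn _ _ _) erased => // /(_ isT) /andP[-> ->]; rewrite !andbF.
Qed.

Section Robust.
Variables (N : nat) (robustP : robust P N).

Lemma alice_view_eq_from x y y' e e' k n : k <= n <= N ->
  (views P x y e k).1 = (views P x y' e' k).1 ->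
  (forall j, k <= j < n -> ~~ a_turn P x (views P x y e j).1 -> e j && e' j) ->
  (views P x y e n).1 = (views P x y' e' n).1.
Proof.
elim: n => [|n IH] /andP[le_kn lt_nN] eq_k erased; first by [].
move: le_kn; rewrite leq_eqVlt => /predU1P[<- // | lt_kn].
apply: alice_view_step; [exact: robustP | exact: robustP | |].
- apply: IH => [|//|j /andP[le_kj lt_jn]]; first by rewrite -ltnS lt_kn ltnW.
  by apply: erased; rewrite le_kj ltnW.
- by apply: erased; rewrite -ltnS lt_kn ltnSn.
Qed.

Lemma bob_view_eq_from x x' y e e' k n : k <= n <= N ->
  (views P x y e k).2 = (views P x' y e' k).2 ->
  (forall j, k <= j < n -> b_turn P y (views P x y e j).2 -> e j && e' j) ->
  (views P x y e n).2 = (views P x' y e' n).2.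
Proof.
elim: n => [|n IH] /andP[le_kn lt_nN] eq_k erased; first by [].
move: le_kn; rewrite leq_eqVlt => /predU1P[<- // | lt_kn].
apply: bob_view_step; [exact: robustP | exact: robustP | |].
- apply: IH => [|//|j /andP[le_kj lt_jn]]; first by rewrite -ltnS lt_kn ltnW.
  by apply: erased; rewrite le_kj ltnW.
- by apply: erased; rewrite -ltnS lt_kn ltnSn.
Qed.

Lemma speaker_erase_from_step x y e k i : k < i < N ->
  speaker P x y (erase_from e k.+1) i = speaker P x y (erase_from e k) i.
Proof.
move=> /andP[lt_ki lt_iN].
have le_kiN : k <= i <= N by rewrite ltnW // ltnW.
have eq_k : views P x y (erase_from e k.+1) k = views P x y (erase_from e k) k.
  apply: views_eq_prefix => j lt_jk.
  by rewrite /erase_from ltnNge (ltnW lt_jk) leqNgt lt_jk.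
have erased_after j : k < j -> erase_from e k.+1 j && erase_from e k j.
  by move=> lt_kj; rewrite /erase_from lt_kj (ltnW lt_kj).
have lt_kN : k < N by rewrite (ltn_trans lt_ki).
case turn_k: (a_turn P x (views P x y (erase_from e k.+1) k).1).
- rewrite /speaker; congr (a_turn _ _ _).
  apply: (alice_view_eq_from le_kiN); first by rewrite eq_k.
  move=> j /andP[le_kj _]; case: ltngtP le_kj => [lt_kj _ _ | // | <-].
    exact: erased_after.
  by rewrite turn_k.
- rewrite /speaker !robustP //; congr (b_turn _ _ _).
  apply: (bob_view_eq_from le_kiN); first by rewrite eq_k.
  move=> j /andP[le_kj _]; case: ltngtP le_kj => [lt_kj _ _ | // | <-].
    exact: erased_after.
  by rewrite -robustP // turn_k.
Qed.

Lemma speaker_erase_all x y e i : i < N ->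
  speaker P x y e i = speaker P x y erase_all i.
Proof.
move=> lt_iN.
have -> : speaker P x y e i = speaker P x y (erase_from e i) i.
  rewrite /speaker (@views_eq_prefix _ _ _ (erase_from e i)) // => j lt_ji.
  by rewrite /erase_from leqNgt lt_ji.
have erase_suffix k : k <= i -> speaker P x y (erase_from e k) i = speaker P x y erase_all i.
  elim: k => [// | k IH] lt_ki.
  by rewrite speaker_erase_from_step ?lt_ki ?lt_iN // IH // ltnW.
exact: erase_suffix (leqnn i).
Qed.

Lemma speaker_erase_all_inputs x y x' y' i : i < N ->
  speaker P x y erase_all i = speaker P x' y' erase_all i.
Proof.
move=> lt_iN; have le_iN : 0 <= i <= N := ltnW lt_iN.
rewrite /speaker (alice_view_eq_from (y' := y') (e' := erase_all) le_iN) // robustP //.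
by rewrite (bob_view_eq_from (x' := x') (e' := erase_all) le_iN) // -robustP.
Qed.

Lemma robust_speaker_indep x y e x' y' e' i : i < N ->
  speaker P x y e i = speaker P x' y' e' i.
Proof.
move=> lt_iN.
by rewrite speaker_erase_all // [RHS]speaker_erase_all // (speaker_erase_all_inputs _ _ x' y').
Qed.

End Robust.
End Views.

Theorem mainTheorem9 (X Y Sigma : Type) (P : protocol X Y Sigma) (N : nat) :
  robust P N -> fixed_order P N.
Proof.
move=> robustP.
case: (Classical_Prop.classic (inhabited (X * Y))) => [[[x0 y0]] | no_inputs].
  exists (fun i => speaker P x0 y0 erase_all i) => x y e i lt_iN.
  exact: (robust_speaker_indep robustP).
by exists (fun=> true) => x y; case: no_inputs; exact: inhabits (x, y).
Qed.
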